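(* Let $I$ be a $b$-nested common interval of $\mathcal{P}$ with domain $D(I)=\{x_1,\ldots,x_r\}$, where $r\geq 1$. Then for every $i$ with $1\leq i\leq r$, the interval $Int(x_i)$ is either $b$-small or a $b$-nested common interval.
   Context: Let $n\geq 1$, $K\geq 1$ and let $\mathcal{P}=\{P_1,\ldots,P_K\}$ be permutations of $\{1,\ldots,n\}$ with $P_1=(1,2,\ldots,n)$. For integers $i\leq j$ write $(i..j)=\{i,i+1,\ldots,j\}$. A common interval of $\mathcal{P}$ is a set of integers occupying consecutive positions in every $P_k$; all common intervals have the form $(i..j)$, and singletons and $(1..n)$ are common. Fix a positive integer $b$. A common interval $I$ is $b$-small if $|I|\leq b$ and $b$-large otherwise. It is $b$-nested if $|I|=1$ or $I$ strictly contains a $b$-nested common interval $J$ with $|J|\geq |I|-b$ (recursive definition on size). Two intervals $(i..j)$, $(k..l)$ overlap if $i<k\leq j<l$ or $k<i\leq l<j$. A common interval is strong if it overlaps no other common interval. The PQ-tree $T$ of $\mathcal{P}$: its nodes are the strong common intervals ($Int(x)$ denotes the interval of node $x$), the root is $(1..n)$, the leaves are the singletons, and the parent of $y$ is the node $x$ with $Int(x)$ the smallest strong common interval strictly containing $Int(y)$. A node $x$ with children set $D$ is a $P$-node if no union $\bigcup_{z\in D'}Int(z)$ with $D'\subset D$, $2\leq|D'|<|D|$, is a common interval; otherwise it is a $Q$-node, and its children $y_1,\ldots,y_r$ are ordered so that $\max Int(y_i)+1=\min Int(y_{i+1})$. It is known that a set $I$ is a common interval iff either $I=Int(x)$ for a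 node $x$, or there is a unique $Q$-node $z$ such that $I$ is the union of the intervals of a run of consecutive children of $z$. The domain $D(I)$ of a common interval $I$ is: the set of children of $x$ if $I=Int(x)$ is strong; otherwise the set $\{x_l,\ldots,x_r\}$ of consecutive children of the $Q$-node $z$ whose intervals have union $I$. *)

From mathcomp Require Import all_boot.
Set Implicit Arguments. Unset Strict Implicit. Unset Printing Implicit Defensive.

Definition itv (p : nat * nat) : seq nat := iota p.1 (p.2.+1 - p.1).
Definition len (p : nat * nat) : nat := p.2.+1 - p.1.

(* The family P = {P_1,...,P_K} of permutations of {1,...,n}, given as a seq
   of seqs, each a permutation of [1;...;n], of length K >= 1, with
   P_1 = (1,2,...,n). *)
Definition perm_family (n : nat) (Ps : seq (seq nat)) : Prop :=
  [/\ 0 < size Ps, head [::] Ps = iota 1 n & all (fun P => perm_eq P (iota 1 n)) Ps].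

Definition consec (P S : seq nat) : Prop :=
  exists a, perm_eq (take (size S) (drop a P)) S.

Definition commonS (n : nat) (Ps : seq (seq nat)) (S : seq nat) : Prop :=
  [/\ S <> [::], uniq S, {subset S <= iota 1 n} & forall P, P \in Ps -> consec P S].

Definition commonI n Ps (I : nat * nat) : Prop := I.1 <= I.2 /\ commonS n Ps (itv I).

Definition subI (I J : nat * nat) : Prop := J.1 <= I.1 /\ I.2 <= J.2.
Definition ssubI (I J : nat * nat) : Prop := subI I J /\ I <> J.

Definition overlap (I J : nat * nat) : Prop :=
  (I.1 < J.1 <= I.2 /\ I.2 < J.2) \/ (J.1 < I.1 <= J.2 /\ J.2 < I.2).

Definition strong n Ps (I : nat * nat) : Prop :=
  commonI n Ps I /\ forall J, commonI n Ps J -> ~ overlap I J.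

(* PQ-tree: nodes are strong intervals (Int(x) = x); y is a child of x iff
   Int(x) is the smallest strong interval strictly containing Int(y). *)
Definition child n Ps (x y : nat * nat) : Prop :=
  [/\ strong n Ps x, strong n Ps y, ssubI y x &
      forall z, strong n Ps z -> ssubI y z -> subI x z].

Definition union_itv (D : seq (nat * nat)) : seq nat := flatten [seq itv p | p <- D].

Definition Qnode n Ps (x : nat * nat) : Prop :=
  strong n Ps x /\
  exists D' : seq (nat * nat),
    [/\ uniq D', forall y, y \in D' -> child n Ps x y, 1 < size D',
        exists2 y, child n Ps x y & y \notin D'
      & commonS n Ps (union_itv D')].

Definition union_of_children n Ps (z I : nat * nat) : Prop :=
  forall k, k \in itv I -> exists y, [/\ child n Ps z y, subI y I & k \in itv y].

Definition in_domain n Ps (I y : nat * nat) : Prop :=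
  (strong n Ps I /\ child n Ps I y) \/
  (~ strong n Ps I /\ exists z, [/\ Qnode n Ps z, union_of_children n Ps z I,
                                    child n Ps z y & subI y I]).

Definition bsmall (b : nat) (I : nat * nat) : Prop := len I <= b.

Inductive bnested n Ps (b : nat) : nat * nat -> Prop :=
| bnested1 i : commonI n Ps (i, i) -> bnested n Ps b (i, i)
| bnestedS I J : commonI n Ps I -> bnested n Ps b J -> ssubI J I ->
    len I <= len J + b -> bnested n Ps b I.

(* Induct on the b-nesting chain of I. A strong interval x inside I overlaps no
   common interval, in particular not the b-nested J from which I grows by at
   most b points. So either x lies in J (induction), or x contains J (then x
   grows from J by at most b points and is b-nested itself), or x misses J and
   fits in the at most b points of I outside J. *)
From mathcomp Require Import all_boot.
From mathcomp Require Import zify.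

Set Implicit Arguments.
Unset Strict Implicit.
Unset Printing Implicit Defensive.

Lemma len_disjoint_subI (x J I : nat * nat) :
  x.1 <= x.2 -> J.1 <= J.2 -> subI x I -> subI J I ->
  ~ overlap x J -> ~ subI x J -> ~ subI J x -> len x + len J <= len I.
Proof.
case: x I J => [x1 x2] [i1 i2] [j1 j2]; rewrite /subI /overlap /len /=; lia.
Qed.

Section BNested.

Variables (n : nat) (Ps : seq (seq nat)) (b : nat).

Lemma bnested_commonI I : bnested n Ps b I -> commonI n Ps I.
Proof. by case. Qed.

Lemma bnested_grow J x :
  bnested n Ps b J -> commonI n Ps x -> subI J x -> len x <= len J + b ->
  bnested n Ps b x.
Proof.
move=> BJ Cx sJx hlen; have [<- // | neJx] := eqVneq J x.
by apply: bnestedS Cx BJ _ hlen; split=> //; apply/eqP.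
Qed.

Lemma strong_sub_bnested I : 0 < b -> bnested n Ps b I ->
  forall x, strong n Ps x -> subI x I -> bsmall b x \/ bnested n Ps b x.
Proof.
move=> b_gt0; elim=> {I} [i _ | I J _ BJ IH [sJI _] hlen] x [[x12 Cx] Nx] sxI.
  by left; move: x12 sxI; rewrite /bsmall /len /subI /=; lia.
have [J12 _] := bnested_commonI BJ.
have [sxJ | nsxJ] : subI x J \/ ~ subI x J by rewrite /subI; lia.
  exact: IH.
have [sJx | nsJx] : subI J x \/ ~ subI J x by rewrite /subI; lia.
  right; apply: (bnested_grow BJ (conj x12 Cx) sJx).
  by move: sJx sxI sJI hlen; rewrite /subI /len; lia.
left; have := len_disjoint_subI x12 J12 sxI sJI (Nx J (bnested_commonI BJ)) nsxJ nsJx.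
by rewrite /bsmall; lia.
Qed.

End BNested.

Lemma in_domain_strong_subI n Ps I x :
  in_domain n Ps I x -> strong n Ps x /\ subI x I.
Proof.
by case=> [[_ [_ Sx [sxI _] _]] | [_ [z [_ _ [_ Sx _ _] sxI]]]].
Qed.

Theorem lemma1 (n K b : nat) (Ps : seq (seq nat)) (I : nat * nat) :
  1 <= n -> size Ps = K -> perm_family n Ps -> 0 < b ->
  bnested n Ps b I ->
  forall x, in_domain n Ps I x -> bsmall b x \/ bnested n Ps b x.
Proof.
move=> _ _ _ b_gt0 BI x /in_domain_strong_subI [Sx sxI].
exact: strong_sub_bnested BI x Sx sxI.
Qed.
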